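(* With the notation $u$, $u_1=\sqrt{1-u^2}$, $u_2=\sqrt{1-\rho_1u^2}$, $P_1=(au,bu_1)$ and the 3-periodic $P_1P_2P_3$ (fixed orientation) as described, let $s_1=|P_2P_3|$, $s_2=|P_3P_1|$, $s_3=|P_1P_2|$. Then there exist polynomials $h_0,h_1,h_2,h_3\in\mathbb{R}[u]$ (coefficients depending only on $a,b$), with $h_1\not\equiv0$, and a sign $\varepsilon\in\{\pm1\}$, such that for all $u\in(-1,1)$: $$h_1(u)\,s_1^2=h_0(u),\qquad h_1(u)\,s_2^2=h_3(u)-\varepsilon\,h_2(u)\,u_1u_2,\qquad h_1(u)\,s_3^2=h_3(u)+\varepsilon\,h_2(u)\,u_1u_2.$$ In particular $s_1,s_2,s_3$ satisfy nonzero polynomial equations $g_1(s_1,u)=0$, $g_2(s_2,u,u_1,u_2)=0$, $g_3(s_3,u,u_1,u_2)=0$.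
   Context: Fix real numbers $a>b>0$, let $E$ be the ellipse $x^2/a^2+y^2/b^2=1$, $c^2=a^2-b^2$, $\delta=\sqrt{a^4-a^2b^2+b^4}$ and $\rho_1=\dfrac{c^2(b^2+\delta)^2}{a^6}$. A 3-periodic is a non-degenerate triangle $P_1P_2P_3$ with all vertices on $E$ such that at each vertex $P_j$ the normal line to $E$ at $P_j$ bisects the interior angle of the triangle at $P_j$. Every point of $E$ is a vertex of exactly one 3-periodic. For $u\in(-1,1)$, $P_1=(au,b\sqrt{1-u^2})$ and $P_2,P_3$ are the other vertices of the 3-periodic through $P_1$, labelled in one fixed orientation for all $u$. *)

From Stdlib Require Import Reals List.
Open Scope R_scope.

Definition pt := (R * R)%type.

Fixpoint peval (p : list R) (x : R) : R :=
  match p with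
  | nil => 0
  | c :: q => c + x * peval q x
  end.

Definition on_ellipse (a b : R) (P : pt) : Prop :=
  (fst P)^2 / a^2 + (snd P)^2 / b^2 = 1.

Definition edist (P Q : pt) : R :=
  sqrt ((fst Q - fst P)^2 + (snd Q - snd P)^2).

(* signed double area of triangle P1 P2 P3 (positive iff counterclockwise) *)
Definition orient (P1 P2 P3 : pt) : R :=
  (fst P2 - fst P1) * (snd P3 - snd P1) - (snd P2 - snd P1) * (fst P3 - fst P1).

(* The normal line to E at P (direction (x/a^2, y/b^2)) contains the interior
   angle bisector of angle Q P R, whose direction is (Q-P)/|PQ| + (R-P)/|PR|. *)
Definition normal_bisects (a b : R) (P Q S : pt) : Prop :=
  let nx := fst P / a^2 in
  let ny := snd P / b^2 in
  let wx := (fst Q - fst P) / edist P Q + (fst S - fst P) / edist P S in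
  let wy := (snd Q - snd P) / edist P Q + (snd S - snd P) / edist P S in
  nx * wy - ny * wx = 0.

Definition three_periodic (a b : R) (P1 P2 P3 : pt) : Prop :=
  on_ellipse a b P1 /\ on_ellipse a b P2 /\ on_ellipse a b P3 /\
  orient P1 P2 P3 <> 0 /\
  normal_bisects a b P1 P2 P3 /\
  normal_bisects a b P2 P3 P1 /\
  normal_bisects a b P3 P1 P2.

Definition delta (a b : R) : R := sqrt (a^4 - a^2 * b^2 + b^4).
Definition rho1 (a b : R) : R :=
  (a^2 - b^2) * (b^2 + delta a b)^2 / a^6.

Definition P1_of (a b u : R) : pt := (a * u, b * sqrt (1 - u^2)).

(* Write points of E as (a X, b Y) with X^2 + Y^2 = 1.  For a chord PQ let m be the
   square of the component of the unit vector along PQ in the direction of the normal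
   (x/a^2, y/b^2) at P.  It is symmetric in P and Q, so the reflection law at the
   vertices makes it the same for the three sides of a 3-periodic, and in the
   parameters it becomes a bilinear relation c0 + c1 X X' + c2 Y Y' = 0 between the
   endpoints of each side.  For the sides through P1 this is a line cutting the unit
   circle at the parameters of P2 and P3; Vieta's formulas turn the relation for the
   third side into (a^2-b^2)^2 m^2 + 2 (a^2+b^2) m - 3 = 0, so m is a constant.  Then
   P2 and P3 are explicit in u, u1 and the square root of the discriminant, which is a
   constant times u2, and the squared side lengths follow by substitution. *)

From Stdlib Require Import Reals List Lra Psatz.
Open Scope R_scope.

(** * Polynomial functions *)

Definition polyfun (f : R -> R) : Prop := exists p, forall x, peval p x = f x.

Fixpoint padd (p q : list R) : list R :=
  match p, q with
  | nil, _ => q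
  | _, nil => p
  | c :: p', d :: q' => (c + d) :: padd p' q'
  end.

Lemma peval_padd p q x : peval (padd p q) x = peval p x + peval q x.
Proof.
  revert q; induction p as [|c p IH]; intros [|d q]; simpl; try ring.
  rewrite IH; ring.
Qed.

Lemma polyfun_ext f g : (forall x, f x = g x) -> polyfun f -> polyfun g.
Proof. intros E [p Hp]; exists p; intro x; rewrite Hp; apply E. Qed.

Lemma polyfun_const c : polyfun (fun _ => c).
Proof. exists (c :: nil); intro x; simpl; ring. Qed.

Lemma polyfun_id : polyfun (fun x => x).
Proof. exists (0 :: 1 :: nil); intro x; simpl; ring. Qed.

Lemma polyfun_add f g : polyfun f -> polyfun g -> polyfun (fun x => f x + g x).
Proof.
  intros [p Hp] [q Hq]; exists (padd p q); intro x.
  rewrite peval_padd, Hp, Hq; reflexivity.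
Qed.

Lemma polyfun_scale c f : polyfun f -> polyfun (fun x => c * f x).
Proof.
  intros [p Hp]; exists (map (Rmult c) p); intro x; rewrite <- Hp; clear Hp.
  induction p as [|d p IH]; simpl; [ring|]; rewrite IH; ring.
Qed.

Lemma polyfun_shift f : polyfun f -> polyfun (fun x => x * f x).
Proof. intros [p Hp]; exists (0 :: p); intro x; simpl; rewrite Hp; ring. Qed.

Lemma polyfun_mul f g : polyfun f -> polyfun g -> polyfun (fun x => f x * g x).
Proof.
  intros [p Hp] Hg; apply (polyfun_ext (fun x => peval p x * g x)).
  { intro x; rewrite Hp; reflexivity. }
  clear Hp; induction p as [|c p IH]; simpl.
  - apply (polyfun_ext (fun _ => 0)); [intro; ring | apply polyfun_const].
  - apply (polyfun_ext (fun x => c * g x + x * (peval p x * g x))); [intro; ring|].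
    apply polyfun_add; [apply polyfun_scale, Hg | apply polyfun_shift, IH].
Qed.

Lemma polyfun_sub f g : polyfun f -> polyfun g -> polyfun (fun x => f x - g x).
Proof.
  intros Hf Hg; apply (polyfun_ext (fun x => f x + -1 * g x)); [intro; ring|].
  apply polyfun_add; [exact Hf | apply polyfun_scale, Hg].
Qed.

Lemma polyfun_pow f n : polyfun f -> polyfun (fun x => f x ^ n).
Proof.
  intro Hf; induction n as [|n IH]; simpl; [apply polyfun_const | apply polyfun_mul; assumption].
Qed.

Ltac polyfun_auto :=
  repeat match goal with
  | |- polyfun (fun _ => ?c) => apply polyfun_const
  | |- polyfun (fun x => x) => apply polyfun_id
  | |- polyfun (fun x => @?f x + @?g x) => apply (polyfun_add f g)
  | |- polyfun (fun x => @?f x - @?g x) => apply (polyfun_sub f g)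
  | |- polyfun (fun x => @?f x * @?g x) => apply (polyfun_mul f g)
  | |- polyfun (fun x => @?f x ^ ?n) => apply (polyfun_pow f n)
  end.

(** * The reflection law and the chord equation *)

Lemma bisector_dot_eq (nx ny e1x e1y e2x e2y : R) :
  0 < nx^2 + ny^2 -> e1x^2 + e1y^2 = 1 -> e2x^2 + e2y^2 = 1 ->
  nx * (e1y + e2y) - ny * (e1x + e2x) = 0 -> e1x * e2y - e1y * e2x <> 0 ->
  nx * e1x + ny * e1y = nx * e2x + ny * e2y.
Proof.
  intros Hn He1 He2 Hpar Hcross.
  set (p1 := nx * e1x + ny * e1y); set (p2 := nx * e2x + ny * e2y).
  (* Lagrange's identity |n|^2 |e|^2 = (n.e)^2 + (n x e)^2, and n x e1 = - n x e2 *)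
  assert (Hsq : (p1 - p2) * (p1 + p2) = 0).
  { assert (L1 : p1^2 + (nx * e1y - ny * e1x)^2 = (nx^2 + ny^2) * (e1x^2 + e1y^2))
      by (unfold p1; ring).
    assert (L2 : p2^2 + (nx * e2y - ny * e2x)^2 = (nx^2 + ny^2) * (e2x^2 + e2y^2))
      by (unfold p2; ring).
    replace (nx * e2y - ny * e2x) with (- (nx * e1y - ny * e1x)) in L2 by lra.
    rewrite He1 in L1; rewrite He2 in L2.
    replace ((p1 - p2) * (p1 + p2)) with (p1^2 - p2^2) by ring.
    replace ((- (nx * e1y - ny * e1x))^2) with ((nx * e1y - ny * e1x)^2) in L2 by ring.
    lra. }
  destruct (Rmult_integral _ _ Hsq) as [E|E]; [lra|].
  exfalso; apply Hcross.
  assert (Hsum : (nx^2 + ny^2) * ((e1x + e2x)^2 + (e1y + e2y)^2)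
                 = (p1 + p2)^2 + (nx * (e1y + e2y) - ny * (e1x + e2x))^2)
    by (unfold p1, p2; ring).
  rewrite E, Hpar in Hsum.
  assert (Hz : (e1x + e2x)^2 + (e1y + e2y)^2 = 0).
  { apply (Rmult_eq_reg_l (nx^2 + ny^2)); lra. }
  assert (e1x + e2x = 0) by nra; assert (e1y + e2y = 0) by nra.
  replace e2x with (- e1x) by lra; replace e2y with (- e1y) by lra; ring.
Qed.

Lemma edist_sq (P Q : pt) : edist P Q ^ 2 = (fst Q - fst P)^2 + (snd Q - snd P)^2.
Proof.
  unfold edist; rewrite pow2_sqrt; [reflexivity|].
  apply Rplus_le_le_0_compat; apply pow2_ge_0.
Qed.

Lemma edist_sym (P Q : pt) : edist P Q = edist Q P.
Proof. unfold edist; f_equal; ring. Qed.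

Lemma sum_sq_pos (x y : R) : x <> 0 \/ y <> 0 -> 0 < x^2 + y^2.
Proof.
  intros [H|H]; pose proof (Rlt_0_sqr _ H); unfold Rsqr in *; nra.
Qed.

Lemma edist_pos (P Q : pt) : P <> Q -> 0 < edist P Q.
Proof.
  destruct P as [px py], Q as [qx qy]; intro Hne; unfold edist; simpl.
  apply sqrt_lt_R0, sum_sq_pos.
  destruct (Req_dec qx px) as [->|]; [destruct (Req_dec qy py) as [->|]|]; [easy|right|left]; lra.
Qed.

Lemma orient_neq0_distinct (P Q S : pt) :
  orient P Q S <> 0 -> P <> Q /\ Q <> S /\ S <> P.
Proof. intro H; repeat split; intros ->; apply H; unfold orient; ring. Qed.

Lemma orient_cycle (P Q S : pt) : orient P Q S = orient Q S P.
Proof. unfold orient; ring. Qed.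

(* For P on E this is the component, along the unit vector from P to Q, of the
   normal vector (x/a^2, y/b^2) at P. *)
Definition normal_proj (a b : R) (P Q : pt) : R :=
  (fst P * fst Q / a^2 + snd P * snd Q / b^2 - 1) / edist P Q.

Lemma normal_proj_sym a b (P Q : pt) : normal_proj a b P Q = normal_proj a b Q P.
Proof.
  unfold normal_proj; rewrite edist_sym, (Rmult_comm (fst P)), (Rmult_comm (snd P)).
  reflexivity.
Qed.

Lemma reflection_law a b (P Q S : pt) : 0 < a -> 0 < b ->
  on_ellipse a b P -> orient P Q S <> 0 -> normal_bisects a b P Q S ->
  normal_proj a b P Q = normal_proj a b P S.
Proof.
  intros Ha Hb HP Hor Hbis.
  destruct (orient_neq0_distinct _ _ _ Hor) as (HPQ & _ & HSP).
  pose proof (edist_pos _ _ HPQ) as HdQ.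
  pose proof (edist_pos P S (fun E => HSP (eq_sym E))) as HdS.
  pose proof (edist_sq P Q) as HdQ2; pose proof (edist_sq P S) as HdS2.
  unfold normal_proj, normal_bisects.
  set (dQ := edist P Q) in *; set (dS := edist P S) in *.
  destruct P as [px py], Q as [qx qy], S as [sx sy].
  unfold on_ellipse, orient in *; cbn [fst snd] in *.
  assert (a^2 <> 0) by (apply pow_nonzero; lra).
  assert (b^2 <> 0) by (apply pow_nonzero; lra).
  (* on E, [P.Q/E - 1 = n.(Q - P)] with n the normal vector *)
  replace ((px*qx/a^2 + py*qy/b^2 - 1)/dQ)
    with ((px/a^2) * ((qx-px)/dQ) + (py/b^2) * ((qy-py)/dQ))
    by (rewrite <- HP; field; lra).
  replace ((px*sx/a^2 + py*sy/b^2 - 1)/dS)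
    with ((px/a^2) * ((sx-px)/dS) + (py/b^2) * ((sy-py)/dS))
    by (rewrite <- HP; field; lra).
  apply bisector_dot_eq; [| | |exact Hbis|].
  - apply sum_sq_pos.
    destruct (Req_dec (px/a^2) 0) as [E|]; [right; intro E'|left; assumption].
    replace (px^2/a^2) with (px * (px/a^2)) in HP by (field; lra).
    replace (py^2/b^2) with (py * (py/b^2)) in HP by (field; lra).
    rewrite E, E' in HP; lra.
  - replace (((qx-px)/dQ)^2 + ((qy-py)/dQ)^2) with (((qx-px)^2 + (qy-py)^2)/dQ^2)
      by (field; lra).
    rewrite <- HdQ2; field; lra.
  - replace (((sx-px)/dS)^2 + ((sy-py)/dS)^2) with (((sx-px)^2 + (sy-py)^2)/dS^2)
      by (field; lra).
    rewrite <- HdS2; field; lra.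
  - intro Hc; apply Hor.
    replace ((qx-px)*(sy-py) - (qy-py)*(sx-px))
      with (dQ*dS*((qx-px)/dQ * ((sy-py)/dS) - (qy-py)/dQ * ((sx-px)/dS)))
      by (field; lra).
    rewrite Hc; ring.
Qed.

Lemma on_ellipse_param a b (P : pt) : 0 < a -> 0 < b -> on_ellipse a b P ->
  exists X Y, P = (a * X, b * Y) /\ X^2 + Y^2 = 1.
Proof.
  destruct P as [x y]; unfold on_ellipse; cbn [fst snd]; intros Ha Hb HP.
  exists (x / a), (y / b); split.
  - f_equal; field; lra.
  - rewrite <- HP; field; lra.
Qed.

Definition chord_c0 (a b m : R) : R := m * (a^2 + b^2) - 1.
Definition chord_c1 (a b m : R) : R := 1 + m * (b^2 - a^2).
Definition chord_c2 (a b m : R) : R := 1 + m * (a^2 - b^2).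

Definition chord_eq (a b m X Y X' Y' : R) : Prop :=
  chord_c0 a b m + chord_c1 a b m * (X * X') + chord_c2 a b m * (Y * Y') = 0.

Lemma chord_eq_normal_proj a b X Y X' Y' : 0 < a -> 0 < b ->
  X^2 + Y^2 = 1 -> X'^2 + Y'^2 = 1 -> (a * X, b * Y) <> (a * X', b * Y') ->
  let m := normal_proj a b (a * X, b * Y) (a * X', b * Y') ^ 2 in
  0 < m /\ chord_eq a b m X Y X' Y'.
Proof.
  intros Ha Hb C C' Hne m.
  pose proof (edist_pos _ _ Hne) as Hd.
  pose proof (edist_sq (a * X, b * Y) (a * X', b * Y')) as Hd2.
  unfold m, normal_proj, chord_eq, chord_c0, chord_c1, chord_c2 in *; cbn [fst snd] in *.
  set (d := edist (a * X, b * Y) (a * X', b * Y')) in *.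
  (* with w := 1 - X X' - Y Y', the squared chord length factors as w * q and
     the normal projection is - w / d; hence m q = w, which is the chord equation *)
  set (w := 1 - X * X' - Y * Y').
  set (q := a^2 * (1 - X * X' + Y * Y') + b^2 * (1 + X * X' - Y * Y')).
  assert (Hwq : d^2 = w * q).
  { rewrite Hd2.
    replace (w * q) with (a^2 * (X'^2 + X^2 - 2 * X * X') + b^2 * (Y'^2 + Y^2 - 2 * Y * Y')
      + a^2 * ((1 - X^2) * (1 - X'^2) - Y^2 * Y'^2)
      + b^2 * ((1 - Y^2) * (1 - Y'^2) - X^2 * X'^2)) by (unfold w, q; ring).
    replace (1 - X^2) with (Y^2) by lra; replace (1 - X'^2) with (Y'^2) by lra.
    replace (1 - Y^2) with (X^2) by lra; replace (1 - Y'^2) with (X'^2) by lra.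
    ring. }
  replace (a * X * (a * X') / a^2 + b * Y * (b * Y') / b^2 - 1) with (- w)
    by (unfold w; field; lra).
  assert (Hw : w <> 0) by (intro E; rewrite E in Hwq; nra).
  assert (Hmq : (- w / d)^2 * q = w).
  { apply (Rmult_eq_reg_l w); [|exact Hw].
    replace (w * ((- w / d)^2 * q)) with (w^2 * (w * q) / d^2) by (field; lra).
    rewrite <- Hwq; field; lra. }
  split.
  - replace ((- w / d)^2) with (w^2 / d^2) by (field; lra).
    pose proof (Rlt_0_sqr _ Hw); unfold Rsqr in *.
    apply Rdiv_lt_0_compat; [nra | apply pow_lt; exact Hd].
  - replace ((- w / d)^2 * (a^2 + b^2) - 1 + (1 + (- w / d)^2 * (b^2 - a^2)) * (X * X')
             + (1 + (- w / d)^2 * (a^2 - b^2)) * (Y * Y'))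
      with ((- w / d)^2 * q - w) by (unfold w, q; ring).
    rewrite Hmq; ring.
Qed.

Lemma three_periodic_chord_eqs a b X1 Y1 X2 Y2 X3 Y3 : 0 < a -> 0 < b ->
  X1^2 + Y1^2 = 1 -> X2^2 + Y2^2 = 1 -> X3^2 + Y3^2 = 1 ->
  three_periodic a b (a * X1, b * Y1) (a * X2, b * Y2) (a * X3, b * Y3) ->
  exists m, 0 < m /\ chord_eq a b m X1 Y1 X2 Y2 /\ chord_eq a b m X1 Y1 X3 Y3
            /\ chord_eq a b m X2 Y2 X3 Y3.
Proof.
  intros Ha Hb C1 C2 C3 (E1 & E2 & _ & Hor & B1 & B2 & _).
  destruct (orient_neq0_distinct _ _ _ Hor) as (D12 & D23 & D31).
  pose proof (reflection_law a b _ _ _ Ha Hb E1 Hor B1) as R1.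
  rewrite orient_cycle in Hor.
  pose proof (reflection_law a b _ _ _ Ha Hb E2 Hor B2) as R2.
  rewrite (normal_proj_sym a b (a * X2, b * Y2) (a * X1, b * Y1)) in R2.
  destruct (chord_eq_normal_proj a b X1 Y1 X2 Y2) as [Hm R12]; auto.
  destruct (chord_eq_normal_proj a b X1 Y1 X3 Y3) as [_ R13]; auto.
  destruct (chord_eq_normal_proj a b X2 Y2 X3 Y3) as [_ R23]; auto.
  cbv zeta in *; rewrite <- R1 in R13; rewrite R2 in R23.
  exists (normal_proj a b (a * X1, b * Y1) (a * X2, b * Y2) ^ 2); auto.
Qed.

(** * A line meeting the unit circle *)

Lemma line_orient al be ga u v X2 Y2 X3 Y3 :
  al * X2 + be * Y2 + ga = 0 -> al * X3 + be * Y3 + ga = 0 ->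
  be * orient (u, v) (X2, Y2) (X3, Y3) = (X3 - X2) * (al * u + be * v + ga).
Proof.
  intros L2 L3.
  replace (be * orient (u, v) (X2, Y2) (X3, Y3))
    with ((X2 - u) * (al * X3 + be * Y3 + ga) - (X3 - u) * (al * X2 + be * Y2 + ga)
          + (X3 - X2) * (al * u + be * v + ga)) by (unfold orient; cbn [fst snd]; ring).
  rewrite L2, L3; ring.
Qed.

Section LineCircle.

Variables al be ga X2 Y2 X3 Y3 : R.
Hypothesis Hbe : 0 < be.
Hypotheses (C2 : X2^2 + Y2^2 = 1) (C3 : X3^2 + Y3^2 = 1).
Hypotheses (L2 : al * X2 + be * Y2 + ga = 0) (L3 : al * X3 + be * Y3 + ga = 0).
Hypothesis Hne : (X2, Y2) <> (X3, Y3).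

Lemma line_circle_quadratic X Y : X^2 + Y^2 = 1 -> al * X + be * Y + ga = 0 ->
  (al^2 + be^2) * X^2 + 2 * al * ga * X + ga^2 - be^2 = 0.
Proof.
  intros C L.
  replace ((al^2 + be^2) * X^2 + 2 * al * ga * X + ga^2 - be^2)
    with ((al * X + ga)^2 - be^2 * (1 - X^2)) by ring.
  replace (1 - X^2) with (Y^2) by lra.
  replace (al * X + ga) with (- (be * Y)) by lra; ring.
Qed.

Lemma line_circle_x_neq : X2 <> X3.
Proof.
  intros <-; apply Hne; f_equal.
  apply (Rmult_eq_reg_l be); lra.
Qed.

Lemma line_circle_sum : (al^2 + be^2) * (X2 + X3) = - 2 * al * ga.
Proof.
  pose proof (line_circle_quadratic X2 Y2 C2 L2) as Q2.
  pose proof (line_circle_quadratic X3 Y3 C3 L3) as Q3.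
  apply (Rmult_eq_reg_l (X2 - X3)); [|pose proof line_circle_x_neq; lra].
  lra.
Qed.

Lemma line_circle_prod_x : (al^2 + be^2) * (X2 * X3) = ga^2 - be^2.
Proof.
  pose proof (line_circle_quadratic X2 Y2 C2 L2) as Q2.
  pose proof line_circle_sum as S.
  replace (2 * al * ga * X2) with (- ((al^2 + be^2) * (X2 + X3)) * X2) in Q2
    by (rewrite S; ring).
  lra.
Qed.

Lemma line_circle_prod_y : (al^2 + be^2) * (Y2 * Y3) = ga^2 - al^2.
Proof.
  apply (Rmult_eq_reg_l (be^2)); [|apply pow_nonzero; lra].
  replace (be^2 * ((al^2 + be^2) * (Y2 * Y3)))
    with ((al^2 + be^2) * ((be * Y2) * (be * Y3))) by ring.
  replace (be * Y2) with (- (al * X2 + ga)) by lra.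
  replace (be * Y3) with (- (al * X3 + ga)) by lra.
  replace ((al^2 + be^2) * (- (al * X2 + ga) * - (al * X3 + ga)))
    with ((al^2 + be^2) * ga^2 + al * ga * ((al^2 + be^2) * (X2 + X3))
          + al^2 * ((al^2 + be^2) * (X2 * X3))) by ring.
  rewrite line_circle_sum, line_circle_prod_x; ring.
Qed.

Lemma line_circle_diff_sq :
  ((al^2 + be^2) * (X3 - X2))^2 = 4 * be^2 * (al^2 + be^2 - ga^2).
Proof.
  replace (((al^2 + be^2) * (X3 - X2))^2)
    with (((al^2 + be^2) * (X2 + X3))^2 - 4 * (al^2 + be^2) * ((al^2 + be^2) * (X2 * X3)))
    by ring.
  rewrite line_circle_sum, line_circle_prod_x; ring.
Qed.

Lemma line_circle_discr_nonneg : 0 <= al^2 + be^2 - ga^2.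
Proof.
  pose proof line_circle_diff_sq as D.
  pose proof (pow2_ge_0 ((al^2 + be^2) * (X3 - X2))).
  assert (0 < 4 * be^2) by (pose proof (pow_lt be 2 Hbe); lra).
  nra.
Qed.

Lemma line_circle_endpoints o : o^2 = 1 -> 0 < o * (X3 - X2) ->
  let r := sqrt (al^2 + be^2 - ga^2) in
  (al^2 + be^2) * X2 = - al * ga - o * be * r /\
  (al^2 + be^2) * X3 = - al * ga + o * be * r /\
  (al^2 + be^2) * Y2 = - be * ga + o * al * r /\
  (al^2 + be^2) * Y3 = - be * ga - o * al * r.
Proof.
  intros Ho Hsgn r.
  set (N := al^2 + be^2).
  assert (HN : 0 < N) by (unfold N; pose proof (pow_lt be 2 Hbe); nra).
  assert (Hr2 : r^2 = N - ga^2) by (apply pow2_sqrt, line_circle_discr_nonneg).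
  assert (Hr0 : 0 <= r) by apply sqrt_pos.
  assert (Hdiff : N * (X3 - X2) = 2 * o * be * r).
  { assert (Habs : N * o * (X3 - X2) = 2 * be * r).
    { apply Rsqr_inj; unfold Rsqr.
      - assert (0 < N * (o * (X3 - X2))) by (apply Rmult_lt_0_compat; lra). nra.
      - nra.
      - replace (N * o * (X3 - X2) * (N * o * (X3 - X2)))
          with (o^2 * (N * (X3 - X2))^2) by ring.
        rewrite Ho; unfold N; rewrite line_circle_diff_sq; fold N; rewrite <- Hr2; ring. }
    replace (N * (X3 - X2)) with (o^2 * (N * (X3 - X2))) by (rewrite Ho; ring).
    replace (o^2 * (N * (X3 - X2))) with (o * (N * o * (X3 - X2))) by ring.
    rewrite Habs; ring. }
  pose proof line_circle_sum as S; fold N in S.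
  assert (EX2 : N * X2 = - al * ga - o * be * r) by lra.
  assert (EX3 : N * X3 = - al * ga + o * be * r) by lra.
  split; [exact EX2|]; split; [exact EX3|]; split.
  - apply (Rmult_eq_reg_l be); [|lra].
    replace (be * (N * Y2)) with (N * (be * Y2)) by ring.
    replace (be * Y2) with (- al * X2 - ga) by lra.
    replace (N * (- al * X2 - ga)) with (- al * (N * X2) - ga * N) by ring.
    rewrite EX2; unfold N; ring.
  - apply (Rmult_eq_reg_l be); [|lra].
    replace (be * (N * Y3)) with (N * (be * Y3)) by ring.
    replace (be * Y3) with (- al * X3 - ga) by lra.
    replace (N * (- al * X3 - ga)) with (- al * (N * X3) - ga * N) by ring.
    rewrite EX3; unfold N; ring.
Qed.

End LineCircle.

(** * The common normal projection of the sides *)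

Definition mquad (a b m : R) : R := (a^2 - b^2)^2 * m^2 + 2 * (a^2 + b^2) * m - 3.

Lemma chord_c2_pos a b m : 0 < b -> b < a -> 0 <= m -> 0 < chord_c2 a b m.
Proof.
  intros; unfold chord_c2.
  assert (0 <= m * (a^2 - b^2)) by (apply Rmult_le_pos; nra).
  lra.
Qed.

Lemma chord_eq_line a b m u v X Y : chord_eq a b m u v X Y ->
  (chord_c1 a b m * u) * X + (chord_c2 a b m * v) * Y + chord_c0 a b m = 0.
Proof. unfold chord_eq; lra. Qed.

Lemma chord_coef_orient a b m u v : u^2 + v^2 = 1 ->
  chord_c0 a b m + chord_c1 a b m * u^2 + chord_c2 a b m * v^2
  = 2 * m * (a^2 * v^2 + b^2 * u^2).
Proof.
  intro Huv; replace (v^2) with (1 - u^2) by lra.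
  unfold chord_c0, chord_c1, chord_c2; ring.
Qed.

Lemma chord_coef_identity a b m u v : u^2 + v^2 = 1 ->
  let c0 := chord_c0 a b m in let c1 := chord_c1 a b m in let c2 := chord_c2 a b m in
  c0 * ((c1 * u)^2 + (c2 * v)^2) + c1 * (c0^2 - (c2 * v)^2) + c2 * (c0^2 - (c1 * u)^2)
  = 2 * mquad a b m * m * (a^2 * v^2 + b^2 * u^2).
Proof.
  intros Huv c0 c1 c2.
  replace ((c2 * v)^2) with (c2^2 * (1 - u^2)) by (rewrite <- Huv; ring).
  replace (v^2) with (1 - u^2) by lra.
  unfold c0, c1, c2, chord_c0, chord_c1, chord_c2, mquad; ring.
Qed.

Lemma chord_eqs_mquad a b m u v X2 Y2 X3 Y3 :
  0 < b -> b < a -> 0 < m -> 0 < v -> u^2 + v^2 = 1 ->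
  X2^2 + Y2^2 = 1 -> X3^2 + Y3^2 = 1 -> (X2, Y2) <> (X3, Y3) ->
  chord_eq a b m u v X2 Y2 -> chord_eq a b m u v X3 Y3 -> chord_eq a b m X2 Y2 X3 Y3 ->
  mquad a b m = 0.
Proof.
  intros Hb Hab Hm Hv Huv C2 C3 Hne R12 R13 R23.
  pose proof (chord_coef_identity a b m u v Huv) as Id; cbv zeta in Id.
  apply chord_eq_line in R12, R13; unfold chord_eq in R23.
  set (c0 := chord_c0 a b m) in *; set (c1 := chord_c1 a b m) in *;
    set (c2 := chord_c2 a b m) in *.
  assert (Hbe : 0 < c2 * v) by (apply Rmult_lt_0_compat; [apply chord_c2_pos; lra|exact Hv]).
  pose proof (line_circle_prod_x _ _ _ _ _ _ _ Hbe C2 C3 R12 R13 Hne) as PX.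
  pose proof (line_circle_prod_y _ _ _ _ _ _ _ Hbe C2 C3 R12 R13 Hne) as PY.
  (* by Vieta, N times the third chord equation is the left side of [Id] *)
  assert (Hz : 2 * mquad a b m * m * (a^2 * v^2 + b^2 * u^2) = 0).
  { rewrite <- Id, <- PX, <- PY.
    replace 0 with (((c1 * u)^2 + (c2 * v)^2) * (c0 + c1 * (X2 * X3) + c2 * (Y2 * Y3)))
      by (rewrite R23; ring).
    ring. }
  assert (0 < a^2 * v^2 + b^2 * u^2)
    by (pose proof (pow_lt v 2 Hv); assert (0 < a^2) by nra; nra).
  assert (0 < 2 * m * (a^2 * v^2 + b^2 * u^2)) by (apply Rmult_lt_0_compat; lra).
  nra.
Qed.

Lemma delta_sq a b : delta a b ^ 2 = a^4 - a^2 * b^2 + b^4.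
Proof. unfold delta; rewrite pow2_sqrt; [ring | nra]. Qed.

Lemma delta_gt a b : 0 < b -> b < a -> b^2 < delta a b.
Proof.
  intros Hb Hab.
  pose proof (delta_sq a b) as Hd.
  assert (0 <= delta a b) by apply sqrt_pos.
  assert (0 < a^2 * (a^2 - b^2)) by (apply Rmult_lt_0_compat; nra).
  nra.
Qed.

Definition m0 (a b : R) : R := (2 * delta a b - a^2 - b^2) / (a^2 - b^2)^2.

Lemma m0_pos a b : 0 < b -> b < a -> 0 < m0 a b.
Proof.
  intros Hb Hab; unfold m0.
  pose proof (delta_sq a b) as Hd; pose proof (delta_gt a b Hb Hab).
  assert (a^2 + b^2 < 2 * delta a b) by nra.
  apply Rdiv_lt_0_compat; [lra | apply pow_lt; nra].
Qed.

Lemma mquad_pos_root a b m : 0 < b -> b < a -> 0 < m -> mquad a b m = 0 -> m = m0 a b.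
Proof.
  intros Hb Hab Hm Hq; unfold mquad in Hq; unfold m0.
  pose proof (delta_sq a b) as Hd; pose proof (delta_gt a b Hb Hab).
  assert (Hc : 0 < (a^2 - b^2)^2) by (apply pow_lt; nra).
  assert (F : ((a^2 - b^2)^2 * m - (2 * delta a b - a^2 - b^2))
              * ((a^2 - b^2)^2 * m + (2 * delta a b + a^2 + b^2)) = 0).
  { replace 0 with ((a^2 - b^2)^2 * 0 - 4 * (delta a b ^ 2 - (a^4 - a^2 * b^2 + b^4)))
      by (rewrite Hd; ring).
    rewrite <- Hq; ring. }
  destruct (Rmult_integral _ _ F) as [E|E].
  - apply (Rmult_eq_reg_l ((a^2 - b^2)^2)); [|lra].
    replace ((a^2 - b^2)^2 * ((2 * delta a b - a^2 - b^2) / (a^2 - b^2)^2))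
      with (2 * delta a b - a^2 - b^2) by (field; nra).
    lra.
  - assert (0 < (a^2 - b^2)^2 * m) by (apply Rmult_lt_0_compat; lra).
    nra.
Qed.

Definition k0 (a b : R) : R := chord_c0 a b (m0 a b).
Definition k1 (a b : R) : R := chord_c1 a b (m0 a b).
Definition k2 (a b : R) : R := chord_c2 a b (m0 a b).
Definition Kc (a b : R) : R := sqrt (k2 a b ^ 2 - k0 a b ^ 2).

Lemma k2_pos a b : 0 < b -> b < a -> 0 < k2 a b.
Proof. intros; apply chord_c2_pos, Rlt_le, m0_pos; assumption. Qed.

Lemma one_sub_m0_b2 a b : 0 < b -> b < a ->
  1 - m0 a b * b^2 = (delta a b - b^2)^2 / (a^2 - b^2)^2.
Proof.
  intros Hb Hab; unfold m0.
  assert (a^2 - b^2 <> 0) by nra.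
  field_simplify_eq; [|assumption].
  replace ((delta a b - b^2)^2) with (delta a b ^ 2 - 2 * delta a b * b^2 + b^4) by ring.
  rewrite delta_sq; ring.
Qed.

Lemma k2_sq_sub_k0_sq_nonneg a b : 0 < b -> b < a -> 0 <= k2 a b ^ 2 - k0 a b ^ 2.
Proof.
  intros Hb Hab.
  replace (k2 a b ^ 2 - k0 a b ^ 2) with (4 * m0 a b * a^2 * (1 - m0 a b * b^2))
    by (unfold k0, k2, chord_c0, chord_c2; ring).
  rewrite one_sub_m0_b2 by assumption.
  pose proof (m0_pos a b Hb Hab).
  assert (0 <= (delta a b - b^2)^2 / (a^2 - b^2)^2)
    by (apply Rle_mult_inv_pos; [apply pow2_ge_0 | apply pow_lt; nra]).
  assert (0 <= 4 * m0 a b * a^2) by nra.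
  nra.
Qed.

Lemma rho1_k a b : 0 < b -> b < a ->
  rho1 a b * (k2 a b ^ 2 - k0 a b ^ 2) = k2 a b ^ 2 - k1 a b ^ 2.
Proof.
  intros Hb Hab.
  replace (k2 a b ^ 2 - k0 a b ^ 2) with (4 * m0 a b * a^2 * (1 - m0 a b * b^2))
    by (unfold k0, k2, chord_c0, chord_c2; ring).
  replace (k2 a b ^ 2 - k1 a b ^ 2) with (4 * m0 a b * (a^2 - b^2))
    by (unfold k1, k2, chord_c1, chord_c2; ring).
  rewrite one_sub_m0_b2 by assumption.
  unfold rho1.
  pose proof (delta_gt a b Hb Hab).
  assert (0 < a^2 - b^2) by nra; assert (0 < a^2) by nra.
  replace (b^2 + delta a b) with ((delta a b ^ 2 - b^4) / (delta a b - b^2)) by (field; lra).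
  rewrite delta_sq.
  field; repeat split; nra.
Qed.

(** * Vertices and side lengths *)

Lemma orient_scale a b (X1 Y1 X2 Y2 X3 Y3 : R) :
  orient (a * X1, b * Y1) (a * X2, b * Y2) (a * X3, b * Y3)
  = a * b * orient (X1, Y1) (X2, Y2) (X3, Y3).
Proof. unfold orient; cbn [fst snd]; ring. Qed.

Lemma chord_eqs_orient_sign a b m o u v X2 Y2 X3 Y3 :
  0 < b -> b < a -> 0 < m -> 0 < v -> u^2 + v^2 = 1 ->
  chord_eq a b m u v X2 Y2 -> chord_eq a b m u v X3 Y3 ->
  0 < o * orient (u, v) (X2, Y2) (X3, Y3) -> 0 < o * (X3 - X2).
Proof.
  intros Hb Hab Hm Hv Huv R2 R3 Hor.
  apply chord_eq_line in R2, R3.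
  pose proof (line_orient _ _ _ u v _ _ _ _ R2 R3) as HO.
  replace (chord_c1 a b m * u * u + chord_c2 a b m * v * v + chord_c0 a b m)
    with (2 * m * (a^2 * v^2 + b^2 * u^2)) in HO
    by (rewrite <- (chord_coef_orient a b m u v Huv); ring).
  set (K := 2 * m * (a^2 * v^2 + b^2 * u^2)) in HO.
  assert (HK : 0 < K).
  { assert (0 < a^2 * v^2 + b^2 * u^2)
      by (pose proof (pow_lt v 2 Hv); assert (0 < a^2) by nra; nra).
    unfold K; apply Rmult_lt_0_compat; lra. }
  assert (Hbe : 0 < chord_c2 a b m * v)
    by (apply Rmult_lt_0_compat; [apply chord_c2_pos; lra | exact Hv]).
  apply (Rmult_lt_reg_r K); [exact HK|].
  replace (o * (X3 - X2) * K) with (chord_c2 a b m * v * (o * orient (u, v) (X2, Y2) (X3, Y3)))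
    by (rewrite <- Rmult_assoc, (Rmult_comm _ o), Rmult_assoc, HO; ring).
  rewrite Rmult_0_l; apply Rmult_lt_0_compat; assumption.
Qed.

Lemma three_periodic_vertices a b o u (P2 P3 : pt) :
  0 < b -> b < a -> o^2 = 1 -> -1 < u < 1 ->
  three_periodic a b (P1_of a b u) P2 P3 -> 0 < o * orient (P1_of a b u) P2 P3 ->
  let u1 := sqrt (1 - u^2) in
  let al := k1 a b * u in let be := k2 a b * u1 in let ga := k0 a b in
  let r := sqrt (al^2 + be^2 - ga^2) in
  exists X2 Y2 X3 Y3, P2 = (a * X2, b * Y2) /\ P3 = (a * X3, b * Y3) /\
    0 <= al^2 + be^2 - ga^2 /\
    (al^2 + be^2) * X2 = - al * ga - o * be * r /\
    (al^2 + be^2) * X3 = - al * ga + o * be * r /\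
    (al^2 + be^2) * Y2 = - be * ga + o * al * r /\
    (al^2 + be^2) * Y3 = - be * ga - o * al * r.
Proof.
  intros Hb Hab Ho Hu H3 Hor u1 al be ga r.
  assert (Ha : 0 < a) by lra.
  assert (Hu1 : 0 < u1) by (apply sqrt_lt_R0; nra).
  assert (C1 : u^2 + u1^2 = 1) by (unfold u1; rewrite pow2_sqrt; nra).
  pose proof H3 as (_ & E2 & E3 & Hor0 & _).
  destruct (on_ellipse_param a b P2 Ha Hb E2) as (X2 & Y2 & -> & C2).
  destruct (on_ellipse_param a b P3 Ha Hb E3) as (X3 & Y3 & -> & C3).
  assert (Hne : (X2, Y2) <> (X3, Y3))
    by (intros [= -> ->]; apply (proj1 (proj2 (orient_neq0_distinct _ _ _ Hor0))); reflexivity).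
  destruct (three_periodic_chord_eqs a b u u1 X2 Y2 X3 Y3 Ha Hb C1 C2 C3 H3)
    as (m & Hm & R12 & R13 & R23).
  pose proof (mquad_pos_root a b m Hb Hab Hm
    (chord_eqs_mquad a b m u u1 X2 Y2 X3 Y3 Hb Hab Hm Hu1 C1 C2 C3 Hne R12 R13 R23)) as ->.
  unfold P1_of in Hor; rewrite orient_scale in Hor.
  assert (Hsgn : 0 < o * (X3 - X2)).
  { apply (chord_eqs_orient_sign a b (m0 a b) o u u1 X2 Y2 X3 Y3); try assumption.
    apply (Rmult_lt_reg_l (a * b)); [nra|].
    rewrite Rmult_0_r, <- Rmult_assoc, (Rmult_comm (a * b) o), Rmult_assoc; exact Hor. }
  apply chord_eq_line in R12, R13.
  assert (Hbe : 0 < be) by (apply Rmult_lt_0_compat; [apply k2_pos|]; assumption).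
  exists X2, Y2, X3, Y3; split; [reflexivity|]; split; [reflexivity|]; split.
  - exact (line_circle_discr_nonneg al be ga X2 Y2 X3 Y3 Hbe C2 C3 R12 R13 Hne).
  - exact (line_circle_endpoints al be ga X2 Y2 X3 Y3 Hbe C2 C3 R12 R13 Hne o Ho Hsgn).
Qed.

Section EndpointDistances.

Variables a b al be ga o r : R.
Hypothesis Ho : o^2 = 1.

Lemma dist_sq_to_endpoint u v X Y :
  (al^2 + be^2) * X = - al * ga - o * be * r ->
  (al^2 + be^2) * Y = - be * ga + o * al * r ->
  (al^2 + be^2)^2 * ((a * X - a * u)^2 + (b * Y - b * v)^2)
  = a^2 * (al * ga + (al^2 + be^2) * u)^2 + b^2 * (be * ga + (al^2 + be^2) * v)^2
    + r^2 * (a^2 * be^2 + b^2 * al^2)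
    + 2 * o * r * (a^2 * be * (al * ga + (al^2 + be^2) * u)
                   - b^2 * al * (be * ga + (al^2 + be^2) * v)).
Proof.
  intros EX EY.
  transitivity (a^2 * ((al^2 + be^2) * X - (al^2 + be^2) * u)^2
                + b^2 * ((al^2 + be^2) * Y - (al^2 + be^2) * v)^2); [ring|].
  rewrite EX, EY.
  transitivity (a^2 * (al * ga + (al^2 + be^2) * u)^2 + b^2 * (be * ga + (al^2 + be^2) * v)^2
    + o^2 * r^2 * (a^2 * be^2 + b^2 * al^2)
    + 2 * o * r * (a^2 * be * (al * ga + (al^2 + be^2) * u)
                   - b^2 * al * (be * ga + (al^2 + be^2) * v))); [ring|].
  rewrite Ho; ring.
Qed.

Lemma dist_sq_between_endpoints X2 Y2 X3 Y3 :
  (al^2 + be^2) * X2 = - al * ga - o * be * r ->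
  (al^2 + be^2) * X3 = - al * ga + o * be * r ->
  (al^2 + be^2) * Y2 = - be * ga + o * al * r ->
  (al^2 + be^2) * Y3 = - be * ga - o * al * r ->
  (al^2 + be^2)^2 * ((a * X3 - a * X2)^2 + (b * Y3 - b * Y2)^2)
  = 4 * r^2 * (a^2 * be^2 + b^2 * al^2).
Proof.
  intros EX2 EX3 EY2 EY3.
  transitivity (a^2 * ((al^2 + be^2) * X3 - (al^2 + be^2) * X2)^2
                + b^2 * ((al^2 + be^2) * Y3 - (al^2 + be^2) * Y2)^2); [ring|].
  rewrite EX2, EX3, EY2, EY3.
  transitivity (4 * o^2 * r^2 * (a^2 * be^2 + b^2 * al^2)); [ring|].
  rewrite Ho; ring.
Qed.

End EndpointDistances.

(* In the notation of the statement, h1 = chord_norm^2, h0 = side1_num,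
   h2 = side23_odd and h3 = side23_even. *)
Definition chord_norm (a b u : R) : R := k1 a b ^ 2 * u^2 + k2 a b ^ 2 * (1 - u^2).

Definition side1_num (a b u : R) : R :=
  4 * (chord_norm a b u - k0 a b ^ 2)
    * (a^2 * k2 a b ^ 2 * (1 - u^2) + b^2 * k1 a b ^ 2 * u^2).

Definition side23_even (a b u : R) : R :=
  a^2 * u^2 * (k0 a b * k1 a b + chord_norm a b u)^2
  + b^2 * (1 - u^2) * (k0 a b * k2 a b + chord_norm a b u)^2
  + (chord_norm a b u - k0 a b ^ 2)
    * (a^2 * k2 a b ^ 2 * (1 - u^2) + b^2 * k1 a b ^ 2 * u^2).

Definition side23_odd (a b u : R) : R :=
  2 * Kc a b * u * (a^2 * k2 a b * (k0 a b * k1 a b + chord_norm a b u)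
                    - b^2 * k1 a b * (k0 a b * k2 a b + chord_norm a b u)).

Lemma chord_norm_discr a b u : 0 < b -> b < a ->
  chord_norm a b u - k0 a b ^ 2 = (k2 a b ^ 2 - k0 a b ^ 2) * (1 - rho1 a b * u^2).
Proof.
  intros Hb Hab.
  transitivity (k2 a b ^ 2 - k0 a b ^ 2 - (k2 a b ^ 2 - k1 a b ^ 2) * u^2);
    [unfold chord_norm; ring|].
  rewrite <- (rho1_k a b Hb Hab); ring.
Qed.

Lemma three_periodic_side_lengths a b o u (P2 P3 : pt) :
  0 < b -> b < a -> o^2 = 1 -> -1 < u < 1 ->
  three_periodic a b (P1_of a b u) P2 P3 -> 0 < o * orient (P1_of a b u) P2 P3 ->
  let u1 := sqrt (1 - u^2) in
  let u2 := sqrt (1 - rho1 a b * u^2) in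
  chord_norm a b u ^ 2 * edist P2 P3 ^ 2 = side1_num a b u /\
  chord_norm a b u ^ 2 * edist P3 (P1_of a b u) ^ 2
    = side23_even a b u - o * side23_odd a b u * u1 * u2 /\
  chord_norm a b u ^ 2 * edist (P1_of a b u) P2 ^ 2
    = side23_even a b u + o * side23_odd a b u * u1 * u2.
Proof.
  intros Hb Hab Ho Hu H3 Hor u1 u2.
  destruct (three_periodic_vertices a b o u P2 P3 Hb Hab Ho Hu H3 Hor)
    as (X2 & Y2 & X3 & Y3 & -> & -> & Hd & EX2 & EX3 & EY2 & EY3).
  fold u1 in Hd, EX2, EX3, EY2, EY3.
  set (r := sqrt _) in EX2, EX3, EY2, EY3.
  assert (Hu1 : u1^2 = 1 - u^2) by (apply pow2_sqrt; nra).
  assert (Hr2 : r^2 = (k1 a b * u)^2 + (k2 a b * u1)^2 - k0 a b ^ 2) by (apply pow2_sqrt, Hd).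
  assert (HN : chord_norm a b u = (k1 a b * u)^2 + (k2 a b * u1)^2)
    by (unfold chord_norm; rewrite <- Hu1; ring).
  assert (Hr : r = Kc a b * u2).
  { unfold r, Kc, u2; rewrite <- sqrt_mult_alt by (apply k2_sq_sub_k0_sq_nonneg; lra).
    rewrite <- chord_norm_discr, HN by lra; reflexivity. }
  assert (Ho' : (- o)^2 = 1) by (rewrite <- Ho; ring).
  unfold side1_num, side23_even, side23_odd, P1_of; fold u1.
  rewrite !edist_sq; cbn [fst snd]; rewrite <- Hu1, HN.
  split; [|split].
  - rewrite (dist_sq_between_endpoints a b _ _ _ o r Ho X2 Y2 X3 Y3 EX2 EX3 EY2 EY3).
    rewrite Hr2; ring.
  - replace ((a * u - a * X3)^2 + (b * u1 - b * Y3)^2)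
      with ((a * X3 - a * u)^2 + (b * Y3 - b * u1)^2) by ring.
    rewrite (dist_sq_to_endpoint a b (k1 a b * u) (k2 a b * u1) (k0 a b) (- o) r Ho' u u1 X3 Y3)
      by (rewrite ?EX3, ?EY3; ring).
    rewrite Hr2, Hr; ring.
  - rewrite (dist_sq_to_endpoint a b _ _ _ o r Ho u u1 X2 Y2 EX2 EY2).
    rewrite Hr2, Hr; ring.
Qed.

Theorem lemma6 (a b : R) (Hb : 0 < b) (Hab : b < a)
  (o : R) (Ho : o = 1 \/ o = -1) :
  exists (h0 h1 h2 h3 : list R) (eps : R),
    (eps = 1 \/ eps = -1) /\
    (exists x : R, peval h1 x <> 0) /\
    forall u : R, -1 < u < 1 ->
    forall P2 P3 : pt,
      three_periodic a b (P1_of a b u) P2 P3 ->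
      0 < o * orient (P1_of a b u) P2 P3 ->
      let u1 := sqrt (1 - u^2) in
      let u2 := sqrt (1 - rho1 a b * u^2) in
      let s1 := edist P2 P3 in
      let s2 := edist P3 (P1_of a b u) in
      let s3 := edist (P1_of a b u) P2 in
      peval h1 u * s1^2 = peval h0 u /\
      peval h1 u * s2^2 = peval h3 u - eps * peval h2 u * u1 * u2 /\
      peval h1 u * s3^2 = peval h3 u + eps * peval h2 u * u1 * u2.
Proof.
  assert (polyfun (side1_num a b)) as [h0 E0]
    by (unfold side1_num, chord_norm; polyfun_auto).
  assert (polyfun (fun u => chord_norm a b u ^ 2)) as [h1 E1]
    by (unfold chord_norm; polyfun_auto).
  assert (polyfun (side23_odd a b)) as [h2 E2]
    by (unfold side23_odd, chord_norm; polyfun_auto).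
  assert (polyfun (side23_even a b)) as [h3 E3]
    by (unfold side23_even, chord_norm; polyfun_auto).
  exists h0, h1, h2, h3, o; split; [exact Ho|]; split.
  - exists 0; rewrite E1; unfold chord_norm.
    replace (k1 a b ^ 2 * 0 ^ 2 + k2 a b ^ 2 * (1 - 0 ^ 2)) with (k2 a b ^ 2) by ring.
    apply pow_nonzero, pow_nonzero, Rgt_not_eq, k2_pos; assumption.
  - intros u Hu P2 P3 H3 Hor; cbv zeta; rewrite E0, E1, E2, E3.
    apply three_periodic_side_lengths; try assumption.
    destruct Ho as [-> | ->]; ring.
Qed.
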